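(* For real $\alpha\ne0$ and real $\beta$, let $F_{\alpha,\beta}(x)=\bigl(1+\frac{\alpha}{x}\bigr)^{x+\beta}$, defined for $x>\max\{0,-\alpha\}$ or $x<\min\{0,-\alpha\}$. Then: (1) For $\alpha<0$: $F_{\alpha,\beta}\in\mathcal{C_L}[(-\alpha,\infty)]$ if and only if $\beta\le\alpha$; and $1/F_{\alpha,\beta}\in\mathcal{C_L}[(-\alpha,\infty)]$ if and only if $2\beta\ge\alpha$. (2) For $\alpha>0$: $F_{\alpha,\beta}\in\mathcal{C_L}[(0,\infty)]$ if and only if $2\beta\ge\alpha$; and $1/F_{\alpha,\beta}\in\mathcal{C_L}[(0,\infty)]$ if and only if $\beta\le0$. (3) For $\alpha<0$: $F_{\alpha,\beta}\in\mathcal{A_L}[(-\infty,0)]$ if and only if $\beta\ge0$; and $1/F_{\alpha,\beta}\in\mathcal{A_L}[(-\infty,0)]$ if and only if $2\beta\le\alpha$. (4) For $\alpha>0$: $F_{\alpha,\beta}\in\mathcal{A_L}[(-\infty,-\alpha)]$ if and only if $2\beta\le\alpha$; and $1/F_{\alpha,\beta}\in\mathcal{A_L}[(-\infty,-\alpha)]$ if and only if $\beta\ge\alpha$.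
   Context: For an interval $I$: a positive function $f$ is logarithmically completely monotonic on $I$ if it has derivatives of all orders on $I$ and $(-1)^k[\ln f(x)]^{(k)}\ge0$ for all $x\in I$ and all positive integers $k$; the set of such functions is $\mathcal{C_L}[I]$. A positive function $f$ is logarithmically absolutely monotonic on $I$ if it has derivatives of all orders on $I$ and $[\ln f(x)]^{(k)}\ge0$ for all $x\in I$ and all positive integers $k$; the set of such functions is $\mathcal{A_L}[I]$. *)

From Stdlib Require Import Reals.
From Coquelicot Require Import Coquelicot.
Open Scope R_scope.

Definition smooth_on (I : R -> Prop) (f : R -> R) : Prop :=
  forall (n : nat) (x : R), I x -> ex_derive_n f n x.

Definition log_completely_monotonic (I : R -> Prop) (f : R -> R) : Prop :=
  (forall x, I x -> 0 < f x) /\ smooth_on I f /\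
  forall (k : nat) (x : R), (1 <= k)%nat -> I x ->
    0 <= (-1) ^ k * Derive_n (fun y => ln (f y)) k x.

Definition log_absolutely_monotonic (I : R -> Prop) (f : R -> R) : Prop :=
  (forall x, I x -> 0 < f x) /\ smooth_on I f /\
  forall (k : nat) (x : R), (1 <= k)%nat -> I x ->
    0 <= Derive_n (fun y => ln (f y)) k x.

Definition F (alpha beta : R) (x : R) : R := Rpower (1 + alpha / x) (x + beta).

(* With L = ln F_{a,b}, i.e. L(x) = (x + b) ln (1 + a/x), everything is explicit: for k >= 2,
   (-1)^k L^(k)(x) = (k-2)! Q(x + a, x, b) / (x (x + a))^k, where the polynomial Q
   (deriv_numer) is affine in b and its sign for 0 < x < x + a follows from the weighted
   AM-GM inequality; L' is controlled by 1 - 1/y <= ln y <= (y - 1/y)/2 (y >= 1).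
   Conversely, L'' has the sign of a((2b - a)x + ab), which gives the necessary conditions.
   This settles the case a > 0 on (0, oo). The other cases reduce to it:
   F_{a,b}(y - a) = 1/F_{-a,b-a}(y) moves (-a, oo) to (0, oo), and F_{a,b}(-y) = 1/F_{-a,-b}(y)
   while the reflection x |-> -x turns absolute monotonicity on (-oo, c) into complete
   monotonicity on (-c, oo). *)

From Stdlib Require Import Reals Lra Lia Psatz.
From Coquelicot Require Import Coquelicot.
Open Scope R_scope.

Lemma Rmult_pos_neq0 x y : 0 < x * y -> x <> 0 /\ y <> 0.
Proof. intros H. split; intro E; rewrite E in H; lra. Qed.

Lemma Derive_n_S_Derive (f : R -> R) (n : nat) (x : R) :
  Derive_n f (S n) x = Derive_n (Derive f) n x.
Proof. rewrite <- Nat.add_1_r, <- (Derive_n_comp f n 1). reflexivity. Qed.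

Section FiniteOrderSmoothness.

Variable D : R -> Prop.
Hypothesis HD : open D.

(* Finite order, so that closure under products can be proved by induction. *)
Definition smooth_upto (n : nat) (f : R -> R) : Prop :=
  forall m x, (m <= n)%nat -> D x -> ex_derive_n f m x.

Lemma smooth_upto_0 f : smooth_upto 0 f.
Proof. intros m x Hm _. replace m with 0%nat by lia. exact I. Qed.

Lemma smooth_upto_le m n f : (m <= n)%nat -> smooth_upto n f -> smooth_upto m f.
Proof. intros Hmn Hf k x Hk. apply Hf. lia. Qed.

Lemma smooth_upto_ex_derive n f x : smooth_upto (S n) f -> D x -> ex_derive f x.
Proof. intros Hf Hx. apply (Hf 1%nat); [lia | exact Hx]. Qed.

Lemma smooth_upto_Derive n f : smooth_upto (S n) f -> smooth_upto n (Derive f).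
Proof.
  intros Hf [|m] x Hm Hx; [exact I|].
  apply (ex_derive_ext (Derive_n f (S m))); [intro; apply Derive_n_S_Derive|].
  apply (Hf (S (S m))); [lia | exact Hx].
Qed.

Lemma smooth_upto_is_derive n f f' :
  (forall x, D x -> is_derive f x (f' x)) -> smooth_upto n f' -> smooth_upto (S n) f.
Proof.
  intros Hd Hf' [|[|m]] x Hm Hx; [exact I | exists (f' x); auto |].
  apply (ex_derive_ext_loc (Derive_n f' m)).
  - apply (filter_imp D); [|apply HD, Hx]. intros t Ht.
    rewrite Derive_n_S_Derive. apply Derive_n_ext_loc.
    apply (filter_imp D); [|apply HD, Ht]. intros s Hs.
    symmetry. apply is_derive_unique, Hd, Hs.
  - apply (Hf' (S m)); [lia | exact Hx].
Qed.

Lemma smooth_upto_plus n f g :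
  smooth_upto n f -> smooth_upto n g -> smooth_upto n (fun x => f x + g x).
Proof.
  intros Hf Hg m x Hm Hx.
  apply ex_derive_n_plus; apply (filter_imp D); try apply HD, Hx;
    intros y Hy k Hk; [apply Hf | apply Hg]; auto; lia.
Qed.

Lemma smooth_upto_mult n : forall f g,
  smooth_upto n f -> smooth_upto n g -> smooth_upto n (fun x => f x * g x).
Proof.
  induction n as [|n IH]; intros f g Hf Hg; [apply smooth_upto_0|].
  apply (smooth_upto_is_derive _ _ (fun x => Derive f x * g x + f x * Derive g x)).
  - intros x Hx. apply (is_derive_mult f g).
    + apply Derive_correct, (smooth_upto_ex_derive n); auto.
    + apply Derive_correct, (smooth_upto_ex_derive n); auto.
    + apply Rmult_comm.
  - apply smooth_upto_plus; apply IH.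
    + apply smooth_upto_Derive, Hf.
    + apply (smooth_upto_le n (S n)); auto.
    + apply (smooth_upto_le n (S n)); auto.
    + apply smooth_upto_Derive, Hg.
Qed.

Lemma smooth_upto_mult_exp L (HL : forall n, smooth_upto n L) n : forall c,
  smooth_upto n c -> smooth_upto n (fun x => c x * exp (L x)).
Proof.
  induction n as [|n IH]; intros c Hc; [apply smooth_upto_0|].
  apply (smooth_upto_is_derive _ _ (fun x => (Derive c x + c x * Derive L x) * exp (L x))).
  - intros x Hx.
    replace ((Derive c x + c x * Derive L x) * exp (L x))
      with (Derive c x * exp (L x) + c x * (Derive L x * exp (L x))) by ring.
    apply (is_derive_mult c (fun t => exp (L t))).
    + apply Derive_correct, (smooth_upto_ex_derive n); auto.
    + apply (is_derive_comp exp L); [apply is_derive_exp|].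
      apply Derive_correct, (smooth_upto_ex_derive n); auto.
    + apply Rmult_comm.
  - apply IH, smooth_upto_plus; [apply smooth_upto_Derive, Hc|].
    apply smooth_upto_mult.
    + apply (smooth_upto_le n (S n)); auto.
    + apply smooth_upto_Derive, HL.
Qed.

Lemma smooth_on_exp L : smooth_on D L -> smooth_on D (fun x => exp (L x)).
Proof.
  intros HL n x Hx.
  apply (ex_derive_n_ext (fun t => 1 * exp (L t))); [intro; ring|].
  apply (smooth_upto_mult_exp L) with n; auto.
  - intros k m y _ Hy. apply HL, Hy.
  - intros m y _ _. apply ex_derive_n_const.
Qed.

End FiniteOrderSmoothness.

Definition log_monotonic (s : R) (D : R -> Prop) (f : R -> R) : Prop :=
  (forall x, D x -> 0 < f x) /\ smooth_on D f /\
  forall (k : nat) (x : R), (1 <= k)%nat -> D x ->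
    0 <= s ^ k * Derive_n (fun y => ln (f y)) k x.

Lemma log_completely_monotonic_E : log_completely_monotonic = log_monotonic (-1).
Proof. reflexivity. Qed.

Lemma log_absolutely_monotonic_E D f :
  log_absolutely_monotonic D f <-> log_monotonic 1 D f.
Proof.
  unfold log_absolutely_monotonic, log_monotonic.
  setoid_rewrite pow1. setoid_rewrite Rmult_1_l. reflexivity.
Qed.

Lemma log_monotonic_subset s D E f :
  (forall x, E x -> D x) -> log_monotonic s D f -> log_monotonic s E f.
Proof.
  intros HED [Hpos [Hsm Hsg]].
  split; [|split]; [intros x Hx | intros n x Hx | intros k x Hk Hx]; auto.
Qed.

Lemma log_monotonic_ext s D f g : open D -> (forall x, D x -> f x = g x) ->
  log_monotonic s D f <-> log_monotonic s D g.
Proof.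
  intros HD.
  enough (H : forall f g, (forall x, D x -> f x = g x) ->
                log_monotonic s D f -> log_monotonic s D g).
  { intros Hfg. split; apply H; [|intros x Hx; symmetry]; auto. }
  clear f g. intros f g Hfg [Hpos [Hsm Hsg]].
  assert (Hloc : forall x, D x -> locally x (fun t => f t = g t)).
  { intros x Hx. apply (filter_imp D); [exact Hfg | apply HD, Hx]. }
  split; [|split].
  - intros x Hx. rewrite <- Hfg; auto.
  - intros n x Hx. apply (ex_derive_n_ext_loc f); auto.
  - intros k x Hk Hx. rewrite <- (Derive_n_ext_loc (fun y => ln (f y))); auto.
    apply (filter_imp (fun t => f t = g t)); [intros t ->; reflexivity | auto].
Qed.

Lemma log_monotonic_comp_trans s D c f : log_monotonic s D f ->
  log_monotonic s (fun y => D (y + c)) (fun y => f (y + c)).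
Proof.
  intros [Hpos [Hsm Hsg]]. split; [|split].
  - intros y Hy. apply Hpos, Hy.
  - intros n y Hy. apply ex_derive_n_comp_trans, Hsm, Hy.
  - intros k y Hk Hy. rewrite (Derive_n_comp_trans (fun t => ln (f t))). auto.
Qed.

Lemma smooth_on_comp_opp D f : open D -> smooth_on D f ->
  smooth_on (fun y => D (- y)) (fun y => f (- y)).
Proof.
  intros HD Hf n y Hy. apply ex_derive_n_comp_opp.
  apply (filter_imp D); [intros z Hz k _; apply Hf, Hz | apply HD, Hy].
Qed.

Lemma log_monotonic_comp_opp s D f : open D -> smooth_on D (fun x => ln (f x)) ->
  log_monotonic s D f -> log_monotonic (- s) (fun y => D (- y)) (fun y => f (- y)).
Proof.
  intros HD Hln [Hpos [Hsm Hsg]]. split; [|split].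
  - intros y Hy. apply Hpos, Hy.
  - apply smooth_on_comp_opp; auto.
  - intros k y Hk Hy. rewrite (Derive_n_comp_opp (fun t => ln (f t))).
    + rewrite <- Rmult_assoc, <- Rpow_mult_distr.
      replace (- s * -1) with s by ring. auto.
    + apply (filter_imp D); [intros z Hz j _; apply Hln, Hz | apply HD, Hy].
Qed.

Lemma lcm_gt_iff_shift c f :
  log_completely_monotonic (fun x => c < x) f <->
  log_completely_monotonic (fun y => 0 < y) (fun y => f (y + c)).
Proof.
  rewrite log_completely_monotonic_E. split; intros H.
  - apply (log_monotonic_subset _ (fun y => c < y + c)); [intros; lra|].
    apply log_monotonic_comp_trans, H.
  - apply (log_monotonic_ext _ _ (fun y => f (y + - c + c))).
    + apply open_gt.
    + intros x _. f_equal. ring.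
    + apply (log_monotonic_subset _ (fun y => 0 < y + - c)); [intros; lra|].
      exact (log_monotonic_comp_trans _ _ (- c) _ H).
Qed.

Lemma lam_lt_iff_lcm_opp c f : smooth_on (fun x => x < c) (fun x => ln (f x)) ->
  log_absolutely_monotonic (fun x => x < c) f <->
  log_completely_monotonic (fun y => - c < y) (fun y => f (- y)).
Proof.
  intros Hln. rewrite log_absolutely_monotonic_E, log_completely_monotonic_E.
  split; intros H.
  - apply (log_monotonic_subset _ (fun y => - y < c)); [intros; lra|].
    replace (-1) with (- (1)) by ring.
    apply (log_monotonic_comp_opp 1 (fun x => x < c) f); [apply open_lt | exact Hln | exact H].
  - apply (log_monotonic_ext _ _ (fun y => f (- - y))).
    + apply open_lt.
    + intros x _. rewrite Ropp_involutive. reflexivity.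
    + apply (log_monotonic_subset _ (fun y => - c < - y)); [intros; lra|].
      replace 1 with (- -1) by ring.
      apply (log_monotonic_comp_opp (-1) (fun y => - c < y) (fun y => f (- y)));
        [apply open_gt | | exact H].
      intros n y Hy.
      apply (smooth_on_comp_opp (fun x => x < c) (fun x => ln (f x)) (open_lt c) Hln n y).
      lra.
Qed.

Lemma log_monotonic_exp_iff s D L : open D -> smooth_on D L ->
  log_monotonic s D (fun x => exp (L x)) <->
  forall k x, (1 <= k)%nat -> D x -> 0 <= s ^ k * Derive_n L k x.
Proof.
  intros HD HL.
  assert (HlnL : forall k x, Derive_n (fun y => ln (exp (L y))) k x = Derive_n L k x).
  { intros k x. apply Derive_n_ext. intro; apply ln_exp. }
  split.
  - intros [_ [_ H]] k x Hk Hx. rewrite <- HlnL. auto.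
  - intros H. split; [|split].
    + intros; apply exp_pos.
    + apply smooth_on_exp; auto.
    + intros k x Hk Hx. rewrite HlnL. auto.
Qed.

Lemma one_plus_div_pos a x : 0 < x * (x + a) -> 0 < 1 + a / x.
Proof.
  intros Hd. destruct (Rmult_pos_neq0 _ _ Hd) as [Hx _].
  replace (1 + a / x) with (x * (x + a) / (x * x)) by (field; auto).
  apply Rdiv_lt_0_compat; nra.
Qed.

(* The derivatives of ln (1 + a/x) = ln (x + a) - ln x. *)
Definition ln_ratio_deriv (a : R) (k : nat) (x : R) : R :=
  match k with
  | O => ln (1 + a / x)
  | S j => (-1) ^ j * INR (Factorial.fact j) * (/ (x + a) ^ S j - / x ^ S j)
  end.

Definition lnF (a b x : R) : R := (x + b) * ln (1 + a / x).

(* Leibniz rule; the factor x + b has vanishing second derivative. *)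
Definition lnF_deriv (a b : R) (k : nat) (x : R) : R :=
  (x + b) * ln_ratio_deriv a k x + INR k * ln_ratio_deriv a (pred k) x.

Lemma is_derive_ln_ratio_deriv a k x : 0 < x * (x + a) ->
  is_derive (ln_ratio_deriv a k) x (ln_ratio_deriv a (S k) x).
Proof.
  intros Hd. destruct (Rmult_pos_neq0 _ _ Hd) as [Hx Hxa].
  assert (Hpos := one_plus_div_pos a x Hd).
  destruct k as [|j]; unfold ln_ratio_deriv; auto_derive.
  - repeat split; auto.
  - simpl. field. split; auto.
  - repeat split; try apply Rmult_integral_contrapositive; try split;
      try apply pow_nonzero; auto.
  - change (Factorial.fact (S j)) with (S j * Factorial.fact j)%nat. rewrite mult_INR.
    simpl pow. change (match j with 0%nat => 1 | S _ => INR j + 1 end) with (INR (S j)).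
    field. repeat split; try apply pow_nonzero; auto.
Qed.

Lemma is_derive_lnF_deriv a b k x : 0 < x * (x + a) ->
  is_derive (lnF_deriv a b k) x (lnF_deriv a b (S k) x).
Proof.
  intros Hd. unfold lnF_deriv.
  replace ((x + b) * ln_ratio_deriv a (S k) x + INR (S k) * ln_ratio_deriv a (pred (S k)) x)
    with ((1 * ln_ratio_deriv a k x + (x + b) * ln_ratio_deriv a (S k) x)
          + INR k * ln_ratio_deriv a (S (pred k)) x)
    by (destruct k; simpl pred; rewrite ?S_INR; simpl; ring).
  apply (is_derive_plus (fun t => (t + b) * ln_ratio_deriv a k t)
                        (fun t => INR k * ln_ratio_deriv a (pred k) t)).
  - apply (is_derive_mult (fun t => t + b) (ln_ratio_deriv a k)).
    + auto_derive; auto; ring.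
    + apply is_derive_ln_ratio_deriv, Hd.
    + apply Rmult_comm.
  - apply is_derive_scal, is_derive_ln_ratio_deriv, Hd.
Qed.

Section LnF.

Variables (D : R -> Prop) (a b : R).
Hypothesis HD : open D.
Hypothesis Hdom : forall x, D x -> 0 < x * (x + a).

Lemma Derive_n_lnF k x : D x -> Derive_n (lnF a b) k x = lnF_deriv a b k x.
Proof.
  revert x. induction k as [|k IH]; intros x Hx.
  - unfold lnF, lnF_deriv. simpl. ring.
  - simpl. rewrite (Derive_ext_loc _ (lnF_deriv a b k)).
    + apply is_derive_unique, is_derive_lnF_deriv, Hdom, Hx.
    + apply (filter_imp D); [exact IH | apply HD, Hx].
Qed.

Lemma smooth_on_lnF : smooth_on D (lnF a b).
Proof.
  intros [|m] x Hx; [exact I|].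
  apply (ex_derive_ext_loc (lnF_deriv a b m)).
  - apply (filter_imp D); [intros t Ht; symmetry; apply Derive_n_lnF, Ht | apply HD, Hx].
  - exists (lnF_deriv a b (S m) x). apply is_derive_lnF_deriv, Hdom, Hx.
Qed.

Lemma smooth_on_ln_F : smooth_on D (fun x => ln (F a b x)).
Proof.
  intros n x Hx. apply (ex_derive_n_ext (lnF a b)); [intro; symmetry; apply ln_exp|].
  apply smooth_on_lnF, Hx.
Qed.

Lemma smooth_on_ln_invF : smooth_on D (fun x => ln (/ F a b x)).
Proof.
  intros n x Hx. apply (ex_derive_n_ext (fun y => - lnF a b y)).
  - intro y. unfold F, Rpower. rewrite ln_Rinv, ln_exp; [reflexivity | apply exp_pos].
  - apply ex_derive_n_opp, smooth_on_lnF, Hx.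
Qed.

Lemma log_monotonic_F_iff s :
  log_monotonic s D (F a b) <->
  forall k x, (1 <= k)%nat -> D x -> 0 <= s ^ k * lnF_deriv a b k x.
Proof.
  change (F a b) with (fun x => exp (lnF a b x)).
  rewrite log_monotonic_exp_iff; [| exact HD | exact smooth_on_lnF].
  split; intros H k x Hk Hx; [rewrite <- Derive_n_lnF | rewrite Derive_n_lnF]; auto.
Qed.

Lemma log_monotonic_invF_iff s :
  log_monotonic s D (fun x => / F a b x) <->
  forall k x, (1 <= k)%nat -> D x -> 0 <= s ^ k * - lnF_deriv a b k x.
Proof.
  rewrite (log_monotonic_ext s D _ (fun x => exp (- lnF a b x)) HD);
    [| intros x _; symmetry; apply exp_Ropp].
  rewrite log_monotonic_exp_iff; [| exact HD |].
  - split; intros H k x Hk Hx; specialize (H k x Hk Hx);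
      rewrite Derive_n_opp, Derive_n_lnF in *; auto.
  - intros n x Hx. apply ex_derive_n_opp, smooth_on_lnF, Hx.
Qed.

End LnF.

Definition amgm_defect (n : nat) (p q : R) : R :=
  p ^ S n - INR (S n) * p * q ^ n + INR n * q ^ S n.

Lemma amgm_defect_nonneg n p q : 0 <= p -> 0 <= q -> 0 <= amgm_defect n p q.
Proof.
  intros Hp Hq. induction n as [|n IH]; [unfold amgm_defect; simpl; lra|].
  replace (amgm_defect (S n) p q)
    with (p * amgm_defect n p q + INR (S n) * q ^ n * (p - q) ^ 2)
    by (unfold amgm_defect; rewrite !S_INR; simpl; ring).
  assert (0 <= INR (S n) * q ^ n) by (apply Rmult_le_pos; [apply pos_INR | apply pow_le, Hq]).
  assert (0 <= (p - q) ^ 2) by apply pow2_ge_0.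
  assert (0 <= p * amgm_defect n p q) by (apply Rmult_le_pos; auto).
  nra.
Qed.

(* Twice [deriv_numer n p q b] (below) at b = (p - q)/2. *)
Definition midpoint_numer (n : nat) (p q : R) : R :=
  INR n * (p - q) * (p ^ S n + q ^ S n) - 2 * p * q * (p ^ n - q ^ n).

Lemma midpoint_numer_sign n p q : 0 <= p -> 0 <= q -> 0 <= (p - q) * midpoint_numer n p q.
Proof.
  intros Hp Hq. induction n as [|n IH]; [unfold midpoint_numer; simpl; lra|].
  replace ((p - q) * midpoint_numer (S n) p q)
    with (p * ((p - q) * midpoint_numer n p q) + (p - q) ^ 2 * amgm_defect (S n) p q)
    by (unfold midpoint_numer, amgm_defect; rewrite !S_INR; simpl; ring).
  assert (0 <= amgm_defect (S n) p q) by (apply amgm_defect_nonneg; auto).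
  assert (0 <= (p - q) ^ 2) by apply pow2_ge_0.
  assert (0 <= p * ((p - q) * midpoint_numer n p q)) by (apply Rmult_le_pos; auto).
  nra.
Qed.

Definition deriv_numer (n : nat) (p q b : R) : R :=
  p * q ^ S n - q * p ^ S n + INR n * (b * (p ^ S n - q ^ S n) + (p - q) * q ^ S n).

Lemma deriv_numer_nonneg n p q b :
  0 < q -> q < p -> p - q <= 2 * b -> 0 <= deriv_numer n p q b.
Proof.
  intros Hq Hqp Hb.
  replace (deriv_numer n p q b) with
    (midpoint_numer n p q / 2 + INR n * (b - (p - q) / 2) * (p ^ S n - q ^ S n))
    by (unfold deriv_numer, midpoint_numer; simpl; field).
  assert (0 <= midpoint_numer n p q)
    by (assert (H := midpoint_numer_sign n p q ltac:(lra) ltac:(lra)); nra).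
  assert (q ^ S n <= p ^ S n) by (apply pow_incr; lra).
  assert (0 <= INR n) by apply pos_INR.
  assert (0 <= (b - (p - q) / 2) * (p ^ S n - q ^ S n)) by (apply Rmult_le_pos; lra).
  nra.
Qed.

Lemma deriv_numer_nonpos n p q b : 0 < q -> q < p -> b <= 0 -> deriv_numer n p q b <= 0.
Proof.
  intros Hq Hqp Hb.
  replace (deriv_numer n p q b) with
    (- q * amgm_defect n p q + INR n * b * (p ^ S n - q ^ S n))
    by (unfold deriv_numer, amgm_defect; rewrite S_INR; simpl; ring).
  assert (0 <= q * amgm_defect n p q)
    by (apply Rmult_le_pos; [lra | apply amgm_defect_nonneg; lra]).
  assert (q ^ S n <= p ^ S n) by (apply pow_incr; lra).
  assert (0 <= INR n) by apply pos_INR.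
  assert (0 <= - b * (p ^ S n - q ^ S n)) by (apply Rmult_le_pos; lra).
  nra.
Qed.

Lemma lnF_deriv_1 a b x : 0 < x * (x + a) ->
  lnF_deriv a b 1 x = ln (1 + a / x) - a * (x + b) / (x * (x + a)).
Proof.
  intros Hd. destruct (Rmult_pos_neq0 _ _ Hd) as [Hx Hxa].
  unfold lnF_deriv, ln_ratio_deriv. simpl. field. auto.
Qed.

Lemma lnF_deriv_SS a b j x : 0 < x * (x + a) ->
  (-1) ^ S (S j) * lnF_deriv a b (S (S j)) x =
  INR (Factorial.fact j) * deriv_numer (S j) (x + a) x b / (x * (x + a)) ^ S (S j).
Proof.
  intros Hd. destruct (Rmult_pos_neq0 _ _ Hd) as [Hx Hxa].
  assert (x ^ j <> 0) by (apply pow_nonzero; auto).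
  assert ((x + a) ^ j <> 0) by (apply pow_nonzero; auto).
  assert (Hsq : (-1) ^ j * (-1) ^ j = 1).
  { rewrite <- Rpow_mult_distr. replace (-1 * -1) with 1 by ring. apply pow1. }
  match goal with |- _ = ?r => transitivity ((-1) ^ j * (-1) ^ j * r) end;
    [| rewrite Hsq; ring].
  unfold lnF_deriv, ln_ratio_deriv, deriv_numer. simpl pred.
  change (Factorial.fact (S j)) with (S j * Factorial.fact j)%nat.
  rewrite Rpow_mult_distr, mult_INR, !S_INR. simpl pow. field. auto.
Qed.

Lemma ln_le_half_sub_inv y : 1 <= y -> ln y <= (y - / y) / 2.
Proof.
  intros Hy. destruct (Req_dec y 1) as [->|Hne]; [rewrite ln_1, Rinv_1; lra|].
  destruct (MVT_cor2 (fun t => ln t - (t - / t) / 2) (fun c => - (c - 1) ^ 2 / (2 * c * c)) 1 y)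
    as [c [Heq Hc]]; [lra| |].
  - intros c Hc. apply is_derive_Reals. auto_derive; [repeat split; lra | field; lra].
  - rewrite ln_1, Rinv_1 in Heq.
    assert (0 <= (c - 1) ^ 2 / (2 * c * c))
      by (apply Rle_mult_inv_pos; [apply pow2_ge_0 | nra]).
    nra.
Qed.

Lemma ln_ge_one_sub_inv y : 0 < y -> 1 - / y <= ln y.
Proof.
  intros Hy. assert (H := exp_ineq1_le (- ln y)).
  rewrite exp_Ropp, exp_ln in H; lra.
Qed.

Lemma div_nonneg_iff N P : 0 < P -> 0 <= N / P <-> 0 <= N.
Proof.
  intros HP. split; intros H.
  - replace N with (N / P * P) by (field; lra). apply Rmult_le_pos; lra.
  - apply Rle_mult_inv_pos; auto.
Qed.

Lemma ex_pos_affine_neg m c : m < 0 -> exists x, 0 < x /\ m * x + c < 0.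
Proof.
  intros Hm. exists ((1 + c * c) / - m). split.
  - apply Rdiv_lt_0_compat; nra.
  - replace (m * ((1 + c * c) / - m) + c) with (c - c * c - 1) by (field; lra). nra.
Qed.

Lemma lcm_F_pos_iff a b : 0 < a ->
  log_completely_monotonic (fun x => 0 < x) (F a b) <-> a <= 2 * b.
Proof.
  intros Ha. assert (Hdom : forall x, 0 < x -> 0 < x * (x + a)) by (intros; nra).
  rewrite log_completely_monotonic_E, (log_monotonic_F_iff _ _ _ (open_gt 0) Hdom).
  split.
  - intros H. apply Rnot_lt_le. intros Hb.
    destruct (ex_pos_affine_neg (2 * b - a) (a * b)) as [x [Hx Hneg]]; [lra|].
    specialize (H 2%nat x ltac:(lia) Hx).
    rewrite (lnF_deriv_SS a b 0 x (Hdom x Hx)), div_nonneg_iff in H;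
      [| apply pow_lt, Hdom, Hx].
    replace (deriv_numer 1 (x + a) x b) with (a * ((2 * b - a) * x + a * b)) in H
      by (unfold deriv_numer; simpl; ring).
    change (INR (Factorial.fact 0)) with 1 in H. nra.
  - intros Hb [|[|j]] x Hk Hx; [lia | |].
    + rewrite lnF_deriv_1 by (apply Hdom, Hx).
      assert (Hy : 1 <= 1 + a / x)
        by (assert (0 <= a / x) by (apply Rle_mult_inv_pos; lra); lra).
      assert (Hln := ln_le_half_sub_inv _ Hy).
      assert (Hgap : a * (x + b) / (x * (x + a)) - (1 + a / x - / (1 + a / x)) / 2
                     = a * (2 * b - a) / (2 * (x * (x + a)))) by (field; lra).
      assert (0 <= a * (2 * b - a) / (2 * (x * (x + a)))) by (apply Rle_mult_inv_pos; nra).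
      simpl pow. lra.
    + rewrite lnF_deriv_SS, div_nonneg_iff by (apply pow_lt, Hdom, Hx || apply Hdom, Hx).
      apply Rmult_le_pos; [apply pos_INR | apply deriv_numer_nonneg; lra].
Qed.

Lemma lcm_invF_pos_iff a b : 0 < a ->
  log_completely_monotonic (fun x => 0 < x) (fun x => / F a b x) <-> b <= 0.
Proof.
  intros Ha. assert (Hdom : forall x, 0 < x -> 0 < x * (x + a)) by (intros; nra).
  rewrite log_completely_monotonic_E, (log_monotonic_invF_iff _ _ _ (open_gt 0) Hdom).
  split.
  - intros H. apply Rnot_lt_le. intros Hb.
    specialize (H 2%nat b ltac:(lia) Hb).
    rewrite Ropp_mult_distr_r_reverse, (lnF_deriv_SS a b 0 b (Hdom b Hb)), <- Rdiv_opp_l,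
      div_nonneg_iff in H; [| apply pow_lt, Hdom, Hb].
    replace (deriv_numer 1 (b + a) b b) with (2 * a * (b * b)) in H
      by (unfold deriv_numer; simpl; ring).
    change (INR (Factorial.fact 0)) with 1 in H.
    assert (0 < a * (b * b)) by (apply Rmult_lt_0_compat; nra). lra.
  - intros Hb [|[|j]] x Hk Hx; [lia | |].
    + rewrite lnF_deriv_1 by (apply Hdom, Hx).
      assert (Hy : 0 < 1 + a / x) by (apply one_plus_div_pos, Hdom, Hx).
      assert (Hln := ln_ge_one_sub_inv _ Hy).
      assert (Hgap : 1 - / (1 + a / x) - a * (x + b) / (x * (x + a))
                     = - (a * b) / (x * (x + a))) by (field; lra).
      assert (0 <= - (a * b) / (x * (x + a))) by (apply Rle_mult_inv_pos; nra).
      simpl pow. lra.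
    + rewrite Ropp_mult_distr_r_reverse, lnF_deriv_SS, <- Rdiv_opp_l, div_nonneg_iff
        by (apply pow_lt, Hdom, Hx || apply Hdom, Hx).
      assert (deriv_numer (S j) (x + a) x b <= 0) by (apply deriv_numer_nonpos; lra).
      assert (0 <= INR (Factorial.fact j)) by apply pos_INR.
      nra.
Qed.

Lemma F_shift a b y : 0 < y * (y - a) -> F a b (y - a) = / F (- a) (b - a) y.
Proof.
  intros Hd. destruct (Rmult_pos_neq0 _ _ Hd) as [Hy0 Hya].
  assert (Hy : 0 < 1 + - a / y) by (apply one_plus_div_pos, Hd).
  unfold F, Rpower. rewrite <- exp_Ropp. f_equal.
  replace (1 + a / (y - a)) with (/ (1 + - a / y)) by (field; split; lra).
  rewrite ln_Rinv by exact Hy. ring.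
Qed.

Lemma F_opp a b y : F a b (- y) = / F (- a) (- b) y.
Proof.
  unfold F, Rpower. rewrite <- exp_Ropp, Rdiv_opp_r, Rdiv_opp_l. f_equal. ring.
Qed.

Lemma lcm_F_neg_iff a b : a < 0 ->
  log_completely_monotonic (fun x => - a < x) (F a b) <-> b <= a.
Proof.
  intros Ha. rewrite lcm_gt_iff_shift, log_completely_monotonic_E.
  rewrite (log_monotonic_ext _ _ _ (fun y => / F (- a) (b - a) y) (open_gt 0)).
  - rewrite <- log_completely_monotonic_E, lcm_invF_pos_iff; lra.
  - intros y Hy. apply F_shift. nra.
Qed.

Lemma lcm_invF_neg_iff a b : a < 0 ->
  log_completely_monotonic (fun x => - a < x) (fun x => / F a b x) <-> a <= 2 * b.
Proof.
  intros Ha. rewrite lcm_gt_iff_shift, log_completely_monotonic_E.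
  rewrite (log_monotonic_ext _ _ _ (F (- a) (b - a)) (open_gt 0)).
  - rewrite <- log_completely_monotonic_E, lcm_F_pos_iff; lra.
  - intros y Hy. change (y + - a) with (y - a). rewrite F_shift by nra. apply Rinv_inv.
Qed.

Lemma lam_F_iff_lcm_invF_opp c a b : (forall x, x < c -> 0 < x * (x + a)) ->
  log_absolutely_monotonic (fun x => x < c) (F a b) <->
  log_completely_monotonic (fun y => - c < y) (fun y => / F (- a) (- b) y).
Proof.
  intros Hdom.
  rewrite lam_lt_iff_lcm_opp by (apply smooth_on_ln_F; [apply open_lt | exact Hdom]).
  rewrite !log_completely_monotonic_E.
  apply log_monotonic_ext; [apply open_gt | intros; apply F_opp].
Qed.

Lemma lam_invF_iff_lcm_F_opp c a b : (forall x, x < c -> 0 < x * (x + a)) ->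
  log_absolutely_monotonic (fun x => x < c) (fun x => / F a b x) <->
  log_completely_monotonic (fun y => - c < y) (F (- a) (- b)).
Proof.
  intros Hdom.
  rewrite lam_lt_iff_lcm_opp by (apply smooth_on_ln_invF; [apply open_lt | exact Hdom]).
  rewrite !log_completely_monotonic_E.
  apply log_monotonic_ext; [apply open_gt | intros; rewrite F_opp; apply Rinv_inv].
Qed.

Theorem theorem1p2 (alpha beta : R) (Ha : alpha <> 0) :
  (alpha < 0 ->
     (log_completely_monotonic (fun x => - alpha < x) (F alpha beta) <-> beta <= alpha) /\
     (log_completely_monotonic (fun x => - alpha < x) (fun x => / F alpha beta x)
        <-> alpha <= 2 * beta)) /\
  (0 < alpha ->
     (log_completely_monotonic (fun x => 0 < x) (F alpha beta) <-> alpha <= 2 * beta) /\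
     (log_completely_monotonic (fun x => 0 < x) (fun x => / F alpha beta x)
        <-> beta <= 0)) /\
  (alpha < 0 ->
     (log_absolutely_monotonic (fun x => x < 0) (F alpha beta) <-> 0 <= beta) /\
     (log_absolutely_monotonic (fun x => x < 0) (fun x => / F alpha beta x)
        <-> 2 * beta <= alpha)) /\
  (0 < alpha ->
     (log_absolutely_monotonic (fun x => x < - alpha) (F alpha beta) <-> 2 * beta <= alpha) /\
     (log_absolutely_monotonic (fun x => x < - alpha) (fun x => / F alpha beta x)
        <-> alpha <= beta)).
Proof.
  split; [|split; [|split]]; intros Hsign.
  - split; [apply lcm_F_neg_iff | apply lcm_invF_neg_iff]; exact Hsign.
  - split; [apply lcm_F_pos_iff | apply lcm_invF_pos_iff]; exact Hsign.
  - rewrite lam_F_iff_lcm_invF_opp, lam_invF_iff_lcm_F_opp, Ropp_0,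
      lcm_invF_pos_iff, lcm_F_pos_iff by (intros; nra).
    split; split; lra.
  - rewrite lam_F_iff_lcm_invF_opp, lam_invF_iff_lcm_F_opp,
      lcm_invF_neg_iff, lcm_F_neg_iff by (intros; nra).
    split; split; lra.
Qed.
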